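(* In every execution of the Minimmit protocol (described in the context), every correct processor enters every view $v\in \mathbb{N}_{\geq 1}$.
   Context: Setting. There are $n$ processors $\Pi=\{p_0,\dots,p_{n-1}\}$ and an integer $f$ with $5f+1\le n$. At most $f$ processors may be corrupted by an adversary during the execution and then behave arbitrarily (Byzantine); processors never corrupted are called correct. Processors communicate over point-to-point authenticated channels; every message is signed by its sender; a PKI validates signatures and $H$ is a collision-resistant hash function; attention is restricted to executions in which the adversary cannot forge signatures or find hash collisions. Time is divided into timeslots $t\in\mathbb{N}_{\ge 0}$ (partial synchrony): a message sent at time $t$ arrives at some time $t'>t$ with $t'\le \max\{\text{GST},t\}+\Delta$, where $\Delta$ is known to the protocol and GST is unknown and chosen by the adversary (who also chooses delivery times subject to this constraint). Clocks of correct processors advance in real time. When a correct processor sends a message to all processors, it regards that message as immediately received by itself. Transactions are unique messages signed by the environment; each timeslot each processor may receive a finite set of transactions. Each processor $p_i$ maintains an append-only log $\text{log}_i$ of distinct transactions, $\text{log}_i(t)$ denoting its value at the end of timeslot $t$. Blocks. $\text{lead}(v):=p_j$ with $j=v \bmod n$. The genesis block is $b_{\text{gen}}=(0,\lambda,\lambda)$ ($\lambda$ the empty sequence). Any other block is a tuple $b=(v,\text{Tr},h)$ signed by $\text{lead}(v)$, with $v\in\mathbb{N}_{\ge1}$ ($b.\text{view}=v$, ''a view $v$ block''), $\text{Tr}=b.\text{Tr}$ a sequence of distinct transactions, and $h=b.h$ a hash value; its parent is the block $b'$ with $H(b')=h$. The ancestors of $b$ are $b$ and the ancestors of its parent ($b_{\text{gen}}$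 has only itself). To finalise $b$ means: upon obtaining all ancestors of $b$, the processor sets its log to extend the concatenation of $b'.\text{Tr}$ over ancestors $b'$ of $b$ (with duplicates removed). Messages. A vote for $b$ is $(\text{vote},b)$. An M-notarization for $b$ is a set of $2f+1$ votes for $b$ signed by distinct processors; an L-notarization for $b$ is a set of $n-f$ votes for $b$ signed by distinct processors. A nullify$(v)$ message is $(\text{nullify},v)$; a nullification for view $v$ is a set of $2f+1$ nullify$(v)$ messages signed by distinct processors. Local state of each processor: $\mathtt{S}$, the set of all received messages (automatically updated; it contains a block $b$ if it contains any message having $b$ as an entry; initially it contains only $b_{\text{gen}}$ and an M- and L-notarization for $b_{\text{gen}}$); the current view $\mathtt{v}$ (initially 1; a processor enters view $v$ when $\mathtt{v}$ becomes $v$, and enters view 1 at the start); a timer $\mathtt{T}$ (initially 0, increasing in real time, reset to 0 upon entering a new view); $\mathtt{nullified}$ (initially false) and $\mathtt{notarized}$ (initially $\bot$, a value different from every block). SelectParent$(\mathtt{S},\mathtt{v})$: let $v'<\mathtt{v}$ be greatest such that $\mathtt{S}$ contains an M-notarization for some block of view $v'$; output the lexicographically least such block. ProposeChild$(b,v)$: form a sequence Tr of distinct transactions containing all transactions received and not in $b'.\text{Tr}$ for any ancestor $b'\in\mathtt{S}$ of $b$, and send the block $(v,\text{Tr},H(b))$ to all processors. $\mathtt{S}$ contains a valid proposal $b$ for view $v$ if $\mathtt{S}$ contains (i) precisely one block of the form $b=(v,\text{Tr},h)$ signed by $\text{lead}(v)$, (ii) an M-notarization for some $b'$ with $H(b')=h$,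 say $b'.\text{view}=v'$, and (iii) a nullification for each view in the open interval $(v',v)$. At timeslot $t$ a nullification $N\subseteq\mathtt{S}$ for a view $v$ is new if $\mathtt{S}$ contained no nullification for $v$ at any earlier timeslot and $N$ is lexicographically least among nullifications for $v$ in $\mathtt{S}$; new M-notarizations and new L-notarizations for a block $b$ are defined analogously. Protocol (Minimmit): at every timeslot, correct $p_i$ does, in order: (1) send new nullifications in $\mathtt{S}$ to all processors; (2) send new M- and L-notarizations in $\mathtt{S}$ to all; (3) if $p_i=\text{lead}(\mathtt{v})$, execute ProposeChild(SelectParent$(\mathtt{S},\mathtt{v}),\mathtt{v})$; (4) if $\mathtt{S}$ contains a valid proposal $b$ for view $\mathtt{v}$ and $\mathtt{notarized}=\bot$ and $\mathtt{nullified}=$ false, set $\mathtt{notarized}:=b$ and send $(\text{vote},b)$ to all; (5) if $\mathtt{T}=2\Delta$, $\mathtt{nullified}=$ false and $\mathtt{notarized}=\bot$, set $\mathtt{nullified}:=$ true and send $(\text{nullify},\mathtt{v})$ to all; (6) if $\mathtt{S}$ contains a nullification for $\mathtt{v}$, set $\mathtt{v}:=\mathtt{v}+1$, $\mathtt{nullified}:=$ false, $\mathtt{notarized}:=\bot$; (7) if $\mathtt{S}$ contains an M-notarization for some $b$ with $b.\text{view}=\mathtt{v}$: if $\mathtt{notarized}=\bot$ and $\mathtt{nullified}=$ false send $(\text{vote},b)$ to all; then set $\mathtt{v}:=\mathtt{v}+1$, $\mathtt{nullified}:=$ false, $\mathtt{notarized}:=\bot$; (8) if $\mathtt{nullified}=$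 false, $\mathtt{notarized}\neq\bot$, and $\mathtt{S}$ contains at least $2f+1$ messages signed by distinct processors, each either $(\text{nullify},\mathtt{v})$ or $(\text{vote},b)$ for some $b$ with $b.\text{view}=\mathtt{v}$ and $b\ne\mathtt{notarized}$, then set $\mathtt{nullified}:=$ true and send $(\text{nullify},\mathtt{v})$ to all; (9) if $\mathtt{S}$ contains a new L-notarization for a block $b$, finalise $b$. *)

From mathcomp Require Import all_boot.

Set Implicit Arguments.
Unset Strict Implicit.
Unset Printing Implicit Defensive.

(* Blocks: (view, Tr, h).  Transactions are (unique) natural numbers, hash   *)
(* values are natural numbers; h = None encodes the empty sequence lambda    *)
(* used as the "hash" field of the genesis block.                            *)
Definition block := (nat * seq nat * option nat)%type.
Definition bview (b : block) : nat := b.1.1.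
Definition btr (b : block) : seq nat := b.1.2.
Definition bh (b : block) : option nat := b.2.
Definition bgen : block := (0, [::], None).

Definition wf_block (b : block) : bool :=
  (b == bgen) || [&& 0 < bview b, uniq (btr b) & bh b != None].

(* Atomic signed items.  Notarizations / nullifications are sets of votes /  *)
(* nullify messages; receiving or sending one is receiving or sending its    *)
(* constituent signed votes / nullify messages.                              *)
(*   Vote p b : (vote, b) signed by p                                        *)
(*   Null p v : (nullify, v) signed by p                                     *)
(*   Blk b    : the block b, signed by lead (bview b)                        *)
(*   Tx x     : transaction x (signed by the environment)                    *)
Inductive item (n : nat) : Type :=
| Vote of 'I_n & block
| Null of 'I_n & nat
| Blk of block
| Tx of nat.
Arguments Vote {n}.
Arguments Null {n}.
Arguments Blk {n}.
Arguments Tx {n}.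

Definition item_eqb n (x y : item n) : bool :=
  match x, y with
  | Vote p b, Vote q c => (p == q) && (b == c)
  | Null p v, Null q w => (p == q) && (v == w)
  | Blk b, Blk c => b == c
  | Tx a, Tx c => a == c
  | _, _ => false
  end.

Definition msgset (n : nat) := item n -> bool.
Definition mempty n : msgset n := fun _ => false.
Definition addm n (S P : msgset n) : msgset n := fun x => S x || P x.
Definition one n (x : item n) : msgset n := fun y => item_eqb x y.

Definition wf_item n (x : item n) : bool :=
  match x with
  | Vote _ b => wf_block b
  | Blk b => wf_block b
  | _ => true
  end.

(* index (as a natural number) of the processor whose signature the signed
   object o bears; lead(v) = p_(v mod n). *)
Definition signer n (o : item n) : option nat :=
  match o with
  | Vote p _ => Some (val p)
  | Null p _ => Some (val p)
  | Blk b => if 0 < bview b then Some (bview b %% n) else None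
  | Tx _ => None
  end.

Definition carries n (x o : item n) : Prop :=
  x = o \/ exists p b, x = Vote p b /\ o = Blk b.

Definition is_lead n (i : 'I_n) (v : nat) : bool := val i == v %% n.

(* S always (implicitly) contains b_gen and an M- and L-notarization for it. *)
Definition nsigners n (S : msgset n) (w : nat) : {set 'I_n} := [set p | S (Null p w)].
Definition vsigners n (S : msgset n) (b : block) : {set 'I_n} := [set p | S (Vote p b)].

Definition nullification n (f : nat) (S : msgset n) (w : nat) : bool :=
  2 * f + 1 <= #|nsigners S w|.
Definition Mnot n (f : nat) (S : msgset n) (b : block) : bool :=
  (b == bgen) || (2 * f + 1 <= #|vsigners S b|).
Definition Lnot n (f : nat) (S : msgset n) (b : block) : bool :=
  (b == bgen) || (n - f <= #|vsigners S b|).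

Definition inS n (S : msgset n) (b : block) : bool :=
  [|| b == bgen, S (Blk b) | [exists p, S (Vote p b)]].

(* lexicographically least k-subset of signers: the k smallest indices *)
Definition least_k n (k : nat) (A : {set 'I_n}) (p : 'I_n) : bool :=
  (p \in A) && (#|[set q in A | (val q < val p)%N]| < k).

(* ancestors (in S) of a block: anc H S b a  <=>  a is an ancestor of b *)
Inductive anc n (H : block -> nat) (S : msgset n) : block -> block -> Prop :=
| anc_refl b : anc H S b b
| anc_step b p a : inS S p -> bh b = Some (H p) -> anc H S p a -> anc H S b a.

Fixpoint lexle_seq (s1 s2 : seq nat) : bool :=
  match s1, s2 with
  | [::], _ => true
  | _ :: _, [::] => false
  | x :: s1', y :: s2' => (x < y) || ((x == y) && lexle_seq s1' s2')
  end.
Definition ole (a b : option nat) : bool :=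
  match a, b with
  | None, _ => true
  | Some _, None => false
  | Some x, Some y => x <= y
  end.
Definition block_le (b1 b2 : block) : bool :=
  (bview b1 < bview b2) ||
  ((bview b1 == bview b2) &&
   ((lexle_seq (btr b1) (btr b2) && ~~ lexle_seq (btr b2) (btr b1)) ||
    ((btr b1 == btr b2) && ole (bh b1) (bh b2)))).

Definition select_parent n (f : nat) (S : msgset n) (v : nat) (b : block) : Prop :=
  [/\ Mnot f S b, bview b < v,
      forall b', Mnot f S b' -> bview b' < v -> bview b' <= bview b &
      forall b', Mnot f S b' -> bview b' = bview b -> block_le b b'].

Definition valid_prop n (f : nat) (H : block -> nat) (S : msgset n) (v : nat) (b : block) : Prop :=
  [/\ inS S b, bview b = v,
      (forall b', inS S b' -> bview b' = v -> b' = b) &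
      exists b', [/\ bh b = Some (H b'), Mnot f S b' &
                     forall w, bview b' < w < v -> nullification f S w]].

(*   ctent    : timeslot at which the current view was entered (T = t-ctent)*)
(*   cnot     : notarized (None = bottom)                                    *)
(*   csent    : messages sent (to all) during the current timeslot           *)
(*   centered : views entered during the current timeslot (in order)        *)
(*   cchk     : the value of S when the "new certificate" checks of the      *)
(*              current timeslot were performed                              *)
Record cfg (n : nat) := Cfg {
  cS : msgset n; cv : nat; ctent : nat; cnull : bool; cnot : option block;
  csent : msgset n; centered : seq nat; cchk : msgset n }.

Definition init_cfg n : cfg n :=
  Cfg (@mempty n) 1 0 false None (@mempty n) [::] (@mempty n).

(* send P to all processors (and regard it as immediately received) *)
Definition send n (P : msgset n) (c : cfg n) : cfg n :=
  Cfg (addm (cS c) P) (cv c) (ctent c) (cnull c) (cnot c)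
      (addm (csent c) P) (centered c) (cchk c).
Definition set_null n (c : cfg n) : cfg n :=
  Cfg (cS c) (cv c) (ctent c) true (cnot c) (csent c) (centered c) (cchk c).
Definition set_not n (b : block) (c : cfg n) : cfg n :=
  Cfg (cS c) (cv c) (ctent c) (cnull c) (Some b) (csent c) (centered c) (cchk c).
Definition advance n (t : nat) (c : cfg n) : cfg n :=
  Cfg (cS c) (cv c).+1 t false None (csent c) (rcons (centered c) (cv c).+1) (cchk c).

(* step (1): send new nullifications; Pchk = S at the checks of the previous
   timeslot *)
Definition step1 n (f : nat) (Pchk : msgset n) (c : cfg n) : cfg n :=
  send (fun x => match x with
                 | Null p w => [&& nullification f (cS c) w, ~~ nullification f Pchk w &
                                   least_k (2 * f + 1) (nsigners (cS c) w) p]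
                 | _ => false end) c.

Definition step2 n (f : nat) (Pchk : msgset n) (c : cfg n) : cfg n :=
  send (fun x => match x with
                 | Vote p b =>
                     (b != bgen) &&
                     ([&& 2 * f + 1 <= #|vsigners (cS c) b|,
                          ~~ (2 * f + 1 <= #|vsigners Pchk b|) &
                          least_k (2 * f + 1) (vsigners (cS c) b) p] ||
                      [&& n - f <= #|vsigners (cS c) b|,
                          ~~ (n - f <= #|vsigners Pchk b|) &
                          least_k (n - f) (vsigners (cS c) b) p])
                 | _ => false end) c.

Definition step3 n (f : nat) (H : block -> nat) (i : 'I_n) (c c' : cfg n) : Prop :=
  if is_lead i (cv c) then
    exists (par : block) (Tr : seq nat),
      [/\ select_parent f (cS c) (cv c) par, uniq Tr,
          (forall x, cS c (Tx x) -> (forall a, anc H (cS c) par a -> x \notin btr a) ->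
                     x \in Tr) &
          c' = send (one (Blk (cv c, Tr, Some (H par)))) c]
  else c' = c.

Definition step4 n (f : nat) (H : block -> nat) (i : 'I_n) (c c' : cfg n) : Prop :=
  (exists b, [/\ valid_prop f H (cS c) (cv c) b, cnot c = None, cnull c = false &
                c' = set_not b (send (one (Vote i b)) c)])
  \/ ((~ exists b, valid_prop f H (cS c) (cv c) b) \/ cnot c <> None \/ cnull c = true)
     /\ c' = c.

Definition step5 n (Delta : nat) (i : 'I_n) (t : nat) (c : cfg n) : cfg n :=
  if [&& t - ctent c == 2 * Delta, ~~ cnull c & cnot c == None]
  then set_null (send (one (Null i (cv c))) c) else c.

Definition step6 n (f : nat) (t : nat) (c : cfg n) : cfg n :=
  if nullification f (cS c) (cv c) then advance t c else c.

Definition step7 n (f : nat) (i : 'I_n) (t : nat) (c c' : cfg n) : Prop :=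
  (exists b, [/\ Mnot f (cS c) b, bview b = cv c &
     c' = advance t (if (cnot c == None) && ~~ cnull c
                     then send (one (Vote i b)) c else c)])
  \/ ((forall b, Mnot f (cS c) b -> bview b <> cv c) /\ c' = c).

Definition step8_cond n (f : nat) (c : cfg n) : Prop :=
  [/\ cnull c = false, cnot c <> None &
      exists P : {set 'I_n}, 2 * f + 1 <= #|P| /\
        forall p, p \in P ->
          cS c (Null p (cv c)) \/
          exists b, [/\ bview b = cv c, Some b <> cnot c & cS c (Vote p b)]].
Definition step8 n (f : nat) (i : 'I_n) (c c' : cfg n) : Prop :=
  (step8_cond f c /\ c' = set_null (send (one (Null i (cv c))) c))
  \/ (~ step8_cond f c /\ c' = c).

(* Step (9) (finalisation) only updates the log and sends nothing; it has no
   influence on views, so it is not modelled. *)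

Definition slot n (f Delta : nat) (H : block -> nat) (i : 'I_n) (t : nat)
    (prev : cfg n) (inbox : msgset n) (cur : cfg n) : Prop :=
  let S0 := addm (cS prev) inbox in
  let c0 := Cfg S0 (cv prev) (ctent prev) (cnull prev) (cnot prev) (@mempty n) [::] S0 in
  let c2 := step2 f (cchk prev) (step1 f (cchk prev) c0) in
  exists c3 c4 c7,
    [/\ step3 f H i c2 c3, step4 f H i c3 c4,
        step7 f i t (step6 f t (step5 Delta i t c4)) c7 & step8 f i c7 cur].

Definition prev_cfg n (st : 'I_n -> nat -> cfg n) (i : 'I_n) (t : nat) : cfg n :=
  if t is t'.+1 then st i t' else @init_cfg n.

(* Executions.  inbox i t = messages arriving at processor i at timeslot t; *)
(* st i t = configuration of i at the end of timeslot t.                     *)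
Definition execution n (f Delta GST : nat) (H : block -> nat) (correct : pred 'I_n)
    (inbox : 'I_n -> nat -> msgset n) (st : 'I_n -> nat -> cfg n) : Prop :=
  (forall i t, correct i -> slot f Delta H i t (prev_cfg st i t) (inbox i t) (st i t)) /\
  [/\
      (forall i t, correct i -> exists s : seq (item n), forall x, inbox i t x -> has (item_eqb x) s),
      (forall i t x, correct i -> inbox i t x -> wf_item x),
      (forall i j t x, correct i -> correct j -> i != j -> csent (st i t) x ->
         exists t', t < t' <= maxn GST t + Delta /\ inbox j t' x),
      (forall j t x o (p : 'I_n), correct j -> inbox j t x -> carries x o ->
         signer o = Some (val p) -> correct p ->
         exists t0 y, [/\ t0 < t, csent (st p t0) y & carries y o]) &
      (forall i j t t' b b', correct i -> correct j ->
         inS (cS (st i t)) b -> inS (cS (st j t')) b' -> H b = H b' -> b = b')].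

Definition enters n (st : 'I_n -> nat -> cfg n) (i : 'I_n) (v : nat) : Prop :=
  v = 1 \/ exists t, v \in centered (st i t).

(* Induction on the view v.  Suppose every correct processor eventually
   reaches view v.  If some correct processor ever holds a nullification or an
   M-notarization for v, it forwards 2f+1 of its signatures (steps (1)-(2))
   the first time it has them, so after GST + Delta every correct processor
   holds the certificate and leaves view v.  Otherwise all correct processors
   stay in view v forever; 2 Delta after entering it each has voted or
   nullified, and once these messages are delivered a processor that voted for
   b sees 2f+1 correct processors that nullified or voted for another block
   (fewer than 2f+1 correct ones voted for b, which has no M-notarization, and
   n - f - 2f >= 2f+1), so it nullifies by step (8).  The n - f >= 2f+1
   nullify messages of the correct processors then form a nullification for
   v, a contradiction. *)

From Pilot Require Import Defs.
From mathcomp Require Import all_boot zify.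
From Stdlib Require Import Classical.

Set Implicit Arguments.
Unset Strict Implicit.
Unset Printing Implicit Defensive.

Definition msub n (S S' : msgset n) : Prop := forall x, S x -> S' x.

Definition certified n (f : nat) (S : msgset n) (v : nat) : Prop :=
  nullification f S v \/ exists b, Mnot f S b /\ bview b = v.

Definition acted n (c : cfg n) : Prop := cnull c \/ exists b, cnot c = Some b.

Definition quorum n (f : nat) (S : msgset n) (msg : 'I_n -> item n) : bool :=
  2 * f + 1 <= #|[set p | S (msg p)]|.

Section Certificates.
Variables (n f : nat).
Implicit Types S : msgset n.

Lemma quorum_msub S S' msg : msub S S' -> quorum f S msg -> quorum f S' msg.
Proof.
move=> sS /leq_trans; apply; apply/subset_leq_card/subsetP => p.
by rewrite !inE => /sS.
Qed.

Lemma quorum_mempty msg : ~~ quorum f (@mempty n) msg.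
Proof.
by rewrite /quorum (_ : [set p | _] = set0) ?cards0 ?addn1 //; apply/setP => p; rewrite !inE.
Qed.

Lemma nullification_msub S S' w :
  msub S S' -> nullification f S w -> nullification f S' w.
Proof. exact: quorum_msub. Qed.

Lemma Mnot_msub S S' b : msub S S' -> Mnot f S b -> Mnot f S' b.
Proof.
rewrite /Mnot => sS /orP[-> // | Mb]; apply/orP; right.
exact: quorum_msub sS Mb.
Qed.

Lemma certified_msub S S' v : msub S S' -> certified f S v -> certified f S' v.
Proof.
move=> sS [N | [b [Mb vb]]]; first by left; apply: nullification_msub N.
by right; exists b; split=> //; apply: Mnot_msub Mb.
Qed.

End Certificates.

Lemma least_k_card n k (A : {set 'I_n}) :
  k <= #|A| -> k <= #|[set p | least_k k A p]|.
Proof.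
move: {2}#|A| (erefl #|A|) => m; elim: m A k => [|m IH] A k cardA; rewrite cardA.
  by rewrite leqn0 => /eqP ->.
have [p0 Ap0] : {p0 | p0 \in A} by apply/sigW/set0Pn; rewrite -card_gt0 cardA.
have [q Aq maxq] : exists2 q, q \in A & forall r, r \in A -> val r <= val q.
  by case: (arg_maxnP val Ap0) => q; exists q.
rewrite leq_eqVlt ltnS => /predU1P[-> | km].
  rewrite -{1}cardA subset_leq_card //; apply/subsetP => p Ap.
  rewrite inE /least_k Ap /= -cardA; apply: proper_card; apply/properP.
  split; first by apply/subsetP => r; rewrite inE => /andP[].
  by exists p; rewrite // inE Ap ltnn.
have cardAq : #|A :\ q| = m by move: cardA; rewrite (cardsD1 q) Aq => -[].
apply: leq_trans (IH _ _ cardAq _) (subset_leq_card _); first by rewrite cardAq.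
apply/subsetP => p; rewrite !inE /least_k !inE => /andP[/andP[pq Ap] rank_p].
rewrite Ap; apply: leq_ltn_trans rank_p; apply: subset_leq_card.
apply/subsetP => r; rewrite !inE => /andP[Ar rp]; rewrite Ar rp !andbT.
by apply: contraTneq rp => ->; rewrite -leqNgt maxq.
Qed.

Lemma uniform_bound (T : finType) (P : pred T) (Q : T -> nat -> Prop) :
  (forall x s s', P x -> s <= s' -> Q x s -> Q x s') ->
  (forall x, P x -> exists s, Q x s) -> exists s, forall x, P x -> Q x s.
Proof.
move=> Qmono QP; suff [s Qs] : exists s, forall x, x \in enum T -> P x -> Q x s.
  by exists s => x; apply: Qs; rewrite mem_enum.
elim: (enum T) => [|y ys [s Qs]]; first by exists 0.
case Py: (P y); last by exists s => x; rewrite inE => /orP[/eqP-> | /Qs]; rewrite ?Py.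
have [sy Qy] := QP y Py; exists (maxn s sy) => x; rewrite inE => /orP[/eqP-> _ | xys Px].
  exact: Qmono (leq_maxr _ _) Qy.
exact: Qmono Px (leq_maxl _ _) (Qs x xys Px).
Qed.

Section Phases.
Variables (n : nat) (i : 'I_n) (t : nat).
Implicit Types c : cfg n.

Record grows c c' : Prop := Grows {
  grows_S : msub (cS c) (cS c');
  grows_sent : msub (csent c) (csent c');
  grows_entered : {subset centered c <= centered c'};
  grows_chk : cchk c' = cchk c;
  grows_sent_S : msub (csent c) (cS c) -> msub (csent c') (cS c') }.

(* A slot is a chain of phases, each of which either keeps the current view
   ([stays]) or enters new views ([leaps]).  The flags nullified/notarized are
   only ever set together with sending the matching nullify message or vote;
   the [_sent] fields record this. *)
Record stays c c' : Prop := Stays {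
  stays_grows : grows c c';
  stays_v : cv c' = cv c;
  stays_tent : ctent c' = ctent c;
  stays_null : cnull c -> cnull c';
  stays_not : forall b, cnot c = Some b -> cnot c' = Some b;
  stays_null_sent : cnull c' -> cnull c \/ csent c' (Null i (cv c));
  stays_not_sent : forall b, cnot c' = Some b ->
    cnot c = Some b \/ csent c' (Vote i b) /\ bview b = cv c }.

Record leaps c c' : Prop := Leaps {
  leaps_grows : grows c c';
  leaps_v : cv c < cv c';
  leaps_entered : forall w, cv c < w <= cv c' -> w \in centered c';
  leaps_tent : ctent c' = t;
  leaps_null_sent : cnull c' -> csent c' (Null i (cv c'));
  leaps_not_sent : forall b, cnot c' = Some b -> csent c' (Vote i b) /\ bview b = cv c' }.

Definition evolves c c' : Prop := stays c c' \/ leaps c c'.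

Lemma grows_refl c : grows c c.
Proof. by split. Qed.

Lemma grows_trans c1 c2 c3 : grows c1 c2 -> grows c2 c3 -> grows c1 c3.
Proof.
case=> S12 sent12 ent12 chk12 inv12 [S23 sent23 ent23 chk23 inv23].
split=> [x /S12/S23 | x /sent12/sent23 | w /ent12/ent23 | | /inv12/inv23] //.
by rewrite chk23.
Qed.

Lemma grows_send P c : grows c (send P c).
Proof.
split=> //= [x Sx | x sx | sentS x /orP[/sentS | Px]]; rewrite /addm ?Sx ?sx ?Px ?orbT //.
by move->.
Qed.

Lemma grows_advance c : grows c (advance t c).
Proof. by split=> //= w ent_w; rewrite mem_rcons inE ent_w orbT. Qed.

Lemma stays_refl c : stays c c.
Proof. by split=> //; [exact: grows_refl | left | move=> b ->; left]. Qed.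

Lemma stays_send P c : stays c (send P c).
Proof. by split=> //; [exact: grows_send | left | move=> b /= ->; left]. Qed.

Lemma stays_nullify c : stays c (set_null (send (Defs.one (Null i (cv c))) c)).
Proof.
split=> //=; first by case: (grows_send (Defs.one (Null i (cv c))) c).
- by right; rewrite /addm /Defs.one /= !eqxx orbT.
- by move=> b ->; left.
Qed.

Lemma stays_vote b c : bview b = cv c -> cnot c = None ->
  stays c (set_not b (send (Defs.one (Vote i b)) c)).
Proof.
move=> vb not_c; split=> //=; first by case: (grows_send (Defs.one (Vote i b)) c).
- by move=> b'; rewrite not_c.
- by left.
- by move=> b' [<-]; right; rewrite /addm /Defs.one /= !eqxx orbT.
Qed.

Lemma stays_trans c1 c2 c3 : stays c1 c2 -> stays c2 c3 -> stays c1 c3.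
Proof.
case=> g12 v12 tent12 null12 not12 null_sent12 not_sent12.
case=> g23 v23 tent23 null23 not23 null_sent23 not_sent23.
split; rewrite ?v23 ?tent23 //.
- exact: grows_trans g12 g23.
- by move/null12/null23.
- by move=> b /not12/not23.
- case/null_sent23 => [/null_sent12 [null1 | sent2] | sent3]; first by left.
    by right; apply: (grows_sent g23).
  by right; rewrite -v12.
- move=> b /not_sent23 [/not_sent12 [not1 | [sent2 vb]] | [sent3 vb]]; first by left.
    by right; split=> //; apply: (grows_sent g23).
  by right; rewrite -v12.
Qed.

Lemma leaps_advance c c' : grows c c' -> cv c' = cv c -> leaps c (advance t c').
Proof.
move=> g vc; split=> //=; rewrite ?vc //; first exact: grows_trans g (grows_advance c').
by move=> w; rewrite -eqn_leq => /eqP->; rewrite mem_rcons inE eqxx.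
Qed.

Lemma stays_evolves c c' : stays c c' -> evolves c c'.
Proof. by left. Qed.

Lemma evolves_trans c1 c2 c3 : evolves c1 c2 -> evolves c2 c3 -> evolves c1 c3.
Proof.
case=> [s12 | l12] [s23 | l23]; [left; exact: stays_trans s12 s23 | right..].
- case: s12 l23 => g12 v12 tent12 _ _ _ _ [g23 v23 ent23 tent23 null23 not23].
  by split; rewrite -?v12 //; exact: grows_trans g12 g23.
- case: l12 s23 => g12 v12 ent12 tent12 null12 not12 [g23 v23 tent23 _ _ null23 not23].
  split; rewrite ?v23 ?tent23 //; first exact: grows_trans g12 g23.
  + by move=> w /ent12; apply: (grows_entered g23).
  + by case/null23 => [/null12 /(grows_sent g23) |].
  + by move=> b /not23 [/not12 [/(grows_sent g23)] |].
- case: l12 l23 => g12 v12 ent12 _ _ _ [g23 v23 ent23 tent23 null23 not23].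
  split=> //; first exact: grows_trans g12 g23.
  + exact: ltn_trans v23.
  + move=> w /andP[w1 w3]; case: (leqP w (cv c2)) => w2.
      by apply: (grows_entered g23); apply: ent12; rewrite w1 w2.
    by apply: ent23; rewrite w2 w3.
Qed.

Lemma evolves_grows c c' : evolves c c' -> grows c c'.
Proof. by case=> [[] | []]. Qed.

Lemma evolves_v c c' : evolves c c' -> cv c <= cv c'.
Proof. by case=> [[_ -> ] | [_ /ltnW]]. Qed.

Lemma evolves_same_view c c' : evolves c c' -> cv c' = cv c -> stays c c'.
Proof. by case=> // -[_ + _ _ _ _] => /[swap] ->; rewrite ltnn. Qed.

Section StepsEvolve.
Variables (f Delta : nat) (H : block -> nat).

Lemma step1_stays Pchk c : stays c (step1 f Pchk c).
Proof. exact: stays_send. Qed.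

Lemma step2_stays Pchk c : stays c (step2 f Pchk c).
Proof. exact: stays_send. Qed.

Lemma step3_stays c c' : step3 f H i c c' -> stays c c'.
Proof.
rewrite /step3; case: ifP => _; last by move->; exact: stays_refl.
by case=> par [Tr [_ _ _ ->]]; exact: stays_send.
Qed.

Lemma step4_stays c c' : step4 f H i c c' -> stays c c'.
Proof.
case=> [[b [[_ vb _ _] not_c _ ->]] | [_ ->]]; [exact: stays_vote | exact: stays_refl].
Qed.

Lemma step5_stays c : stays c (step5 Delta i t c).
Proof. by rewrite /step5; case: ifP => _; [exact: stays_nullify | exact: stays_refl]. Qed.

Lemma step6_evolves c : evolves c (step6 f t c).
Proof.
rewrite /step6; case: ifP => _; last exact/stays_evolves/stays_refl.
by right; apply: leaps_advance (grows_refl c) _.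
Qed.

Lemma step7_evolves c c' : step7 f i t c c' -> evolves c c'.
Proof.
case=> [[b [_ _ ->]] | [_ ->]]; last exact/stays_evolves/stays_refl.
right; case: ifP => _; apply: leaps_advance => //; [exact: grows_send | exact: grows_refl].
Qed.

Lemma step8_stays c c' : step8 f i c c' -> stays c c'.
Proof. by case=> -[_ ->]; [exact: stays_nullify | exact: stays_refl]. Qed.

End StepsEvolve.

Lemma stays_acted c c' : stays c c' -> acted c -> acted c'.
Proof.
case=> _ _ _ null_c not_c _ _ [/null_c | [b /not_c]]; first by left.
by right; exists b.
Qed.

Lemma step5_acted Delta c : (2 * Delta < t - ctent c -> acted c) ->
  2 * Delta <= t - ctent c -> acted (step5 Delta i t c).
Proof.
move=> acted_c; rewrite leq_eqVlt /step5 => /orP[/eqP timeout | /acted_c ?]; last first.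
  by case: ifP => _ //; left.
case: ifP => [_ | idle]; first by left.
move: idle; rewrite -timeout eqxx /= => /negbT; rewrite negb_and negbK.
case/orP=> [null_c | ]; first by left.
by case E: (cnot c) => [b|] // _; right; exists b.
Qed.

Section CertifiedSteps.
Variable f : nat.

Lemma step6_leaves c : nullification f (cS c) (cv c) -> cv c < cv (step6 f t c).
Proof. by rewrite /step6 => ->. Qed.

Lemma step6_certified c w : cv c <= w < cv (step6 f t c) -> certified f (cS c) w.
Proof.
rewrite /step6; case: ifP => [N | _]; last by rewrite ltnNge => /andP[->].
by rewrite /= ltnS -eqn_leq => /eqP <-; left.
Qed.

Lemma step7_leaves c c' : step7 f i t c c' ->
  (exists b, Mnot f (cS c) b /\ bview b = cv c) -> cv c < cv c'.
Proof.
case=> [[b [_ _ ->]] | [noM _]]; first by case: ifP.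
by case=> b [Mb vb]; case: (noM b Mb vb).
Qed.

Lemma step7_certified c c' w : step7 f i t c c' -> cv c <= w < cv c' -> certified f (cS c) w.
Proof.
case=> [[b [Mb vb ->]] | [_ ->]]; last by rewrite ltnNge => /andP[->].
rewrite (_ : cv (advance _ _) = (cv c).+1); last by case: ifP.
by rewrite ltnS -eqn_leq => /eqP <-; right; exists b.
Qed.

End CertifiedSteps.
End Phases.

Definition received n (prev : cfg n) (inbox : msgset n) : msgset n := addm (cS prev) inbox.

Section Slot.
Variables (n f Delta : nat) (H : block -> nat) (i : 'I_n) (t : nat).
Variables (prev : cfg n) (inbox : msgset n) (cur : cfg n).
Hypothesis slot_ok : slot f Delta H i t prev inbox cur.

Local Notation S0 := (received prev inbox).
Local Notation c0 :=
  (Cfg S0 (cv prev) (ctent prev) (cnull prev) (cnot prev) (@mempty n) [::] S0).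
Local Notation c2 := (step2 f (cchk prev) (step1 f (cchk prev) c0)).

Lemma slot_parts : exists c4 c7, [/\ stays i c0 c4, stays i c2 c4,
  step7 f i t (step6 f t (step5 Delta i t c4)) c7 & step8 f i c7 cur].
Proof.
case: slot_ok => c3 [c4 [c7 [h3 h4 h7 h8]]]; exists c4, c7.
have s24 := stays_trans (step3_stays h3) (step4_stays h4).
split=> //; apply: stays_trans s24.
exact: stays_trans (step1_stays _ _ _ _) (step2_stays _ _ _ _).
Qed.

Lemma evolves_to_cur c c4 c7 : evolves i t c (step5 Delta i t c4) ->
  step7 f i t (step6 f t (step5 Delta i t c4)) c7 -> step8 f i c7 cur -> evolves i t c cur.
Proof.
move=> ev5 h7 h8; apply: evolves_trans (evolves_trans ev5 (step6_evolves _ _ _ _)) _.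
exact: evolves_trans (step7_evolves h7) (stays_evolves t (step8_stays h8)).
Qed.

Lemma slot_evolves_from c : stays i c c2 -> evolves i t c cur.
Proof.
have [c4 [c7 [_ s24 h7 h8]]] := slot_parts => s; apply: evolves_to_cur h7 h8.
exact/stays_evolves/(stays_trans s)/(stays_trans s24)/step5_stays.
Qed.

Lemma slot_evolves : evolves i t c0 cur.
Proof. exact/slot_evolves_from/(stays_trans (step1_stays _ _ _ _))/step2_stays. Qed.

Lemma slot_received : msub S0 (cS cur).
Proof. exact: grows_S (evolves_grows slot_evolves). Qed.

Lemma slot_prev_S : msub (cS prev) (cS cur).
Proof. by move=> x Sx; apply: slot_received; rewrite /received /addm Sx. Qed.

Lemma slot_chk : cchk cur = S0.
Proof. exact: grows_chk (evolves_grows slot_evolves). Qed.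

Lemma slot_sent_S : msub (csent cur) (cS cur).
Proof. exact: grows_sent_S (evolves_grows slot_evolves) _. Qed.

Lemma slot_v : cv prev <= cv cur.
Proof. exact: evolves_v slot_evolves. Qed.

Lemma slot_entered w : cv prev < w <= cv cur -> w \in centered cur.
Proof.
case: slot_evolves => [[_ -> _ _ _ _ _] | [_ _ entered _ _ _]]; last exact: entered.
by case/andP=> /leq_trans/[apply]; rewrite ltnn.
Qed.

Lemma slot_forwards_nullification w p :
  nullification f S0 w -> ~~ nullification f (cchk prev) w ->
  least_k (2 * f + 1) (nsigners S0 w) p -> csent cur (Null p w).
Proof.
move=> N newN least_p; apply: (grows_sent (evolves_grows (slot_evolves_from (stays_refl _ _)))).
by rewrite /= /addm /= N newN least_p.
Qed.

Lemma slot_forwards_Mnot b p : b != bgen -> 2 * f + 1 <= #|vsigners S0 b| ->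
  ~~ (2 * f + 1 <= #|vsigners (cchk prev) b|) ->
  least_k (2 * f + 1) (vsigners S0 b) p -> csent cur (Vote p b).
Proof.
move=> b_gen M newM least_p.
apply: (grows_sent (evolves_grows (slot_evolves_from (stays_refl _ _)))).
rewrite /= /addm /=.
(* step (1) adds no vote *)
have -> : vsigners (cS (step1 f (cchk prev) c0)) b = vsigners S0 b.
  by apply/setP => q; rewrite !inE /= /addm orbF.
by rewrite b_gen M newM least_p.
Qed.

Lemma slot_leaves : certified f (cS prev) (cv prev) -> cv prev < cv cur.
Proof.
have [c4 [c7 [s04 _ h7 h8]]] := slot_parts => cert.
have s05 := stays_trans s04 (step5_stays i t Delta c4).
rewrite (stays_v (step8_stays h8)) -(stays_v s05).
have {}cert : certified f (cS (step5 Delta i t c4)) (cv (step5 Delta i t c4)).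
  rewrite (stays_v s05); apply: certified_msub cert => x Sx.
  by apply: (grows_S (stays_grows s05)); rewrite /= /received /addm Sx.
have [N | noN] := boolP (nullification f (cS (step5 Delta i t c4)) (cv (step5 Delta i t c4))).
  exact: leq_trans (step6_leaves t N) (evolves_v (step7_evolves h7)).
move: h7; rewrite /step6 (negbTE noN) => h7.
by apply: step7_leaves h7 _; case: cert => // N; rewrite N in noN.
Qed.

Lemma slot_certified w : cv prev <= w < cv cur -> certified f (cS cur) w.
Proof.
have [c4 [c7 [s04 _ h7 h8]]] := slot_parts.
set c5 := step5 Delta i t c4; set c6 := step6 f t c5.
have s05 : stays i c0 c5 := stays_trans s04 (step5_stays i t Delta c4).
have ev7 : evolves i t c7 cur := stays_evolves t (step8_stays h8).
have ev6 : evolves i t c6 cur := evolves_trans (step7_evolves h7) ev7.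
have ev5 : evolves i t c5 cur := evolves_trans (step6_evolves _ _ _ _) ev6.
rewrite (stays_v (step8_stays h8)) => /andP[w_ge w_lt].
case: (ltnP w (cv c6)) => w_c6.
  apply: certified_msub (grows_S (evolves_grows ev5)) _.
  by apply: (step6_certified (t := t)); rewrite w_c6 (stays_v s05) w_ge.
apply: certified_msub (grows_S (evolves_grows ev6)) (step7_certified h7 _).
by rewrite w_c6.
Qed.

Lemma slot_tent : ctent prev <= t -> ctent cur <= t.
Proof. by case: slot_evolves => [[_ _ -> _ _ _ _] | [_ _ _ -> _ _]]. Qed.

Lemma slot_acted : 0 < Delta -> (2 * Delta < t - ctent prev -> acted prev) ->
  2 * Delta <= t - ctent cur -> acted cur.
Proof.
have [c4 [c7 [s04 _ h7 h8]]] := slot_parts => Delta_gt0 acted_prev.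
have s45 := step5_stays i t Delta c4.
case: (evolves_to_cur (stays_evolves t (stays_refl i _)) h7 h8) => [s5 | [_ _ _ -> _ _]];
  last first.
  by rewrite subnn; lia.
rewrite (stays_tent s5) (stays_tent s45) => timeout; apply: stays_acted s5 _.
apply: step5_acted => //; rewrite (stays_tent s04) => late.
exact: stays_acted s04 (acted_prev late).
Qed.

Lemma slot_nullifies b (P : {set 'I_n}) : cv cur = cv prev -> cnot prev = Some b ->
  2 * f + 1 <= #|P| ->
  (forall p, p \in P -> cS prev (Null p (cv prev)) \/
     exists b', [/\ bview b' = cv prev, b' <> b & cS prev (Vote p b')]) ->
  cnull cur.
Proof.
have [c4 [c7 [s04 _ h7 h8]]] := slot_parts => v_cur not_prev P_big P_votes.
have s78 := step8_stays h8.
have ev07 : evolves i t c0 c7.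
  apply: evolves_trans (stays_evolves t (stays_trans s04 (step5_stays i t Delta c4))) _.
  exact: evolves_trans (step6_evolves _ _ _ _) (step7_evolves h7).
have s07 : stays i c0 c7 by apply: (evolves_same_view ev07); rewrite -(stays_v s78).
have not7 : cnot c7 = Some b := stays_not s07 not_prev.
have S07 : msub (cS prev) (cS c7).
  by move=> x Sx; apply: (grows_S (stays_grows s07)); rewrite /= /received /addm Sx.
case null7: (cnull c7); first exact: stays_null s78 null7.
case: h8 => [[_ ->] // | [[]]]; split=> //; first by rewrite not7.
exists P; split=> // p /P_votes[N | [b' [vb' b'b V]]]; rewrite (stays_v s07).
  by left; apply: S07.
by right; exists b'; split=> //; [rewrite not7 => -[] | apply: S07].
Qed.

End Slot.

Section Execution.
Variables (n f Delta GST : nat) (H : block -> nat) (correct : pred 'I_n).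
Variables (inbox : 'I_n -> nat -> msgset n) (st : 'I_n -> nat -> cfg n).
Hypothesis exec : execution f Delta GST H correct inbox st.

Lemma exec_slot k t : correct k ->
  slot f Delta H k t (prev_cfg st k t) (inbox k t) (st k t).
Proof. by case: exec => slots _; apply: slots. Qed.

Lemma cS_mono k t t' : correct k -> t <= t' -> msub (cS (st k t)) (cS (st k t')).
Proof.
move=> ck; elim: t' => [|t' IH]; first by rewrite leqn0 => /eqP->.
rewrite leq_eqVlt ltnS => /predU1P[-> // | /IH sub_t x /sub_t].
exact: (slot_prev_S (exec_slot t'.+1 ck)).
Qed.

Lemma cv_mono k t t' : correct k -> t <= t' -> cv (st k t) <= cv (st k t').
Proof.
move=> ck; elim: t' => [|t' IH]; first by rewrite leqn0 => /eqP->.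
rewrite leq_eqVlt ltnS => /predU1P[-> // | /IH le_t].
exact: leq_trans le_t (slot_v (exec_slot t'.+1 ck)).
Qed.

Lemma cv_gt0 k t : correct k -> 0 < cv (st k t).
Proof. by move=> ck; apply: leq_trans (slot_v (exec_slot 0 ck)) (cv_mono ck (leq0n t)). Qed.

Lemma sent_received k j s x T : correct k -> correct j -> csent (st k s) x ->
  maxn GST s + Delta <= T -> cS (st j T) x.
Proof.
move=> ck cj sent_x late; have [<- | kj] := eqVneq k j.
  by apply: (cS_mono ck _ (slot_sent_S (exec_slot s ck) sent_x)); lia.
case: exec => _ [_ _ delivery _ _].
have [t' [/andP[_ t'_le] inbox_x]] := delivery k j s x ck cj kj sent_x.
apply: (cS_mono cj (leq_trans t'_le late)); apply: (slot_received (exec_slot t' cj)).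
by rewrite /received /addm inbox_x orbT.
Qed.

Lemma first_received j (P : msgset n -> bool) t : correct j ->
  (forall S S', msub S S' -> P S -> P S') -> ~~ P (@mempty n) -> P (cS (st j t)) ->
  exists t0, P (received (prev_cfg st j t0) (inbox j t0)) /\ ~~ P (cchk (prev_cfg st j t0)).
Proof.
move=> cj P_mono P0 Pt.
have ex_t0 : exists t0, P (received (prev_cfg st j t0) (inbox j t0)).
  by exists t.+1; apply: P_mono Pt => x Sx; rewrite /received /addm Sx.
case: (ex_minnP ex_t0) => t0 Pt0 min_t0; exists t0; split=> //.
case: t0 Pt0 min_t0 => [// | s] _ min_t0 /=.
by rewrite (slot_chk (exec_slot s cj)); apply/negP => /min_t0; rewrite ltnn.
Qed.

Lemma quorum_spreads (msg : 'I_n -> item n) j k t : correct j -> correct k ->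
  (forall t0 p, let S0 := received (prev_cfg st j t0) (inbox j t0) in
     quorum f S0 msg -> ~~ quorum f (cchk (prev_cfg st j t0)) msg ->
     least_k (2 * f + 1) [set q | S0 (msg q)] p -> csent (st j t0) (msg p)) ->
  quorum f (cS (st j t)) msg -> exists t', quorum f (cS (st k t')) msg.
Proof.
move=> cj ck forwards Q.
have [t0 [Q0 newQ]] := first_received (P := fun S => quorum f S msg) cj
  (fun S S' => @quorum_msub n f S S' msg) (quorum_mempty f msg) Q.
exists (maxn GST t0 + Delta); apply: leq_trans (least_k_card Q0) (subset_leq_card _).
apply/subsetP => p; rewrite !inE => least_p.
exact: sent_received cj ck (forwards t0 p Q0 newQ least_p) (leqnn _).
Qed.

Lemma certified_spreads j k v t : correct j -> correct k -> 0 < v ->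
  certified f (cS (st j t)) v -> exists t', certified f (cS (st k t')) v.
Proof.
move=> cj ck v_gt0 [N | [b [Mb vb]]].
  have [t' N'] := quorum_spreads (msg := Null^~ v) cj ck
    (fun t0 p => slot_forwards_nullification (w := v) (p := p) (exec_slot t0 cj)) N.
  by exists t'; left.
have b_gen : b != bgen by apply: contraTneq v_gt0 => b_eq; rewrite -vb b_eq.
move: Mb; rewrite /Mnot (negbTE b_gen) => M.
have [t' M'] := quorum_spreads (msg := Vote^~ b) cj ck
  (fun t0 p => slot_forwards_Mnot (p := p) (exec_slot t0 cj) b_gen) M.
by exists t'; right; exists b; rewrite /Mnot (negbTE b_gen).
Qed.

Lemma certified_leaves k v t1 t2 : correct k -> v <= cv (st k t1) ->
  certified f (cS (st k t2)) v -> exists t, v < cv (st k t).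
Proof.
move=> ck v_le cert; set T := maxn t1 t2.
have {}v_le : v <= cv (st k T) := leq_trans v_le (cv_mono ck (leq_maxl _ _)).
have {}cert : certified f (cS (st k T)) v := certified_msub (cS_mono ck (leq_maxr _ _)) cert.
case: (ltnP v (cv (st k T))) => [|v_ge]; first by exists T.
have v_eq : cv (st k T) = v by apply/eqP; rewrite eqn_leq v_ge v_le.
by exists T.+1; rewrite -v_eq; apply: (slot_leaves (exec_slot T.+1 ck)); rewrite /= v_eq.
Qed.

Lemma left_view_certified k t v : correct k -> 0 < v -> v < cv (st k t) ->
  exists t', certified f (cS (st k t')) v.
Proof.
move=> ck v_gt0; elim: t => [|t IH] v_lt.
  by exists 0; apply: (slot_certified (exec_slot 0 ck)); rewrite v_gt0.
case: (ltnP v (cv (st k t))) => [/IH // | v_ge].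
by exists t.+1; apply: (slot_certified (exec_slot t.+1 ck)); rewrite v_ge.
Qed.

Lemma entered_upto k t w : correct k -> 1 < w <= cv (st k t) ->
  exists t', w \in centered (st k t').
Proof.
move=> ck; elim: t => [|t IH] /andP[w_gt1 w_le].
  by exists 0; apply: (slot_entered (exec_slot 0 ck)); rewrite w_gt1.
case: (leqP w (cv (st k t))) => [w_le' | w_gt]; first by apply: IH; rewrite w_gt1.
by exists t.+1; apply: (slot_entered (exec_slot t.+1 ck)); rewrite w_gt.
Qed.

Lemma acted_after_timeout k t : 0 < Delta -> correct k ->
  ctent (st k t) <= t /\ (2 * Delta <= t - ctent (st k t) -> acted (st k t)).
Proof.
move=> Delta_gt0 ck; elim: t => [|t [tent_le IH]].
  split; first exact: (slot_tent (exec_slot 0 ck)).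
  by apply: (slot_acted (exec_slot 0 ck)).
split; first by apply: (slot_tent (exec_slot t.+1 ck)); rewrite /= ltnW.
by apply: (slot_acted (exec_slot t.+1 ck)) => //= late; apply: IH; lia.
Qed.

Definition backed k t (c : cfg n) : Prop :=
  (cnull c -> exists2 s, s <= t & csent (st k s) (Null k (cv c))) /\
  (forall b, cnot c = Some b -> bview b = cv c /\ exists2 s, s <= t & csent (st k s) (Vote k b)).

Lemma backed_step k t : correct k -> backed k t (prev_cfg st k t) -> backed k t (st k t).
Proof.
move=> ck [null_prev not_prev].
case: (slot_evolves (exec_slot t ck)) => [s | [_ _ _ _ null_sent not_sent]]; last first.
  split=> [/null_sent | b /not_sent [sent vb]]; first by exists t.
  by split=> //; exists t.
rewrite /backed (stays_v s); split.
  by case/(stays_null_sent s) => [/null_prev // | sent]; exists t.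
move=> b /(stays_not_sent s) [/not_prev // | [sent vb]].
by split=> //; exists t.
Qed.

Lemma flags_backed k t : correct k -> backed k t (st k t).
Proof.
move=> ck; elim: t => [|t [null_t not_t]]; apply: backed_step => //; split=> //=.
  by move=> /null_t [s s_le sent]; exists s => //; apply: ltnW.
by move=> b /not_t [vb [s s_le sent]]; split=> //; exists s => //; apply: ltnW.
Qed.

Lemma view_stable_persists k t t' : correct k -> t <= t' -> cv (st k t') = cv (st k t) ->
  [/\ ctent (st k t') = ctent (st k t), cnull (st k t) -> cnull (st k t')
    & forall b, cnot (st k t) = Some b -> cnot (st k t') = Some b].
Proof.
move=> ck; elim: t' => [|t' IH]; first by rewrite leqn0 => /eqP->.
rewrite leq_eqVlt ltnS => /predU1P[-> // | t_le] v_eq.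
have v_eq' : cv (st k t') = cv (st k t).
  by apply/eqP; rewrite eqn_leq -{1}v_eq !cv_mono.
have [tent_eq null_t not_t] := IH t_le v_eq'.
have [_ _ tent_s null_s not_s _ _] :=
  evolves_same_view (slot_evolves (exec_slot t'.+1 ck)) (etrans v_eq (esym v_eq')).
split; first by rewrite tent_s.
  by move/null_t/null_s.
by move=> b /not_t/not_s.
Qed.

Section Resilience.
Hypotheses (n_big : 5 * f + 1 <= n) (Delta_gt0 : 0 < Delta).
Hypothesis faulty_le : #|[set p | ~~ correct p]| <= f.

Lemma correct_card : n - f <= #|[set p | correct p]|.
Proof.
have := cardsC [set p | correct p]; rewrite card_ord.
have -> : ~: [set p | correct p] = [set p | ~~ correct p] by apply/setP => p; rewrite !inE.
lia.
Qed.

Section Stuck.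
Variable v : nat.
Hypotheses (v_gt0 : 0 < v) (reach_v : forall k, correct k -> exists t, v <= cv (st k t)).
Hypothesis no_cert : forall k t, correct k -> ~ certified f (cS (st k t)) v.

Lemma stuck_in_view k : correct k -> exists T, forall u, T <= u -> cv (st k u) = v.
Proof.
move=> ck; have [T v_le] := reach_v ck; exists T => u T_le.
apply/eqP; rewrite eqn_leq (leq_trans v_le (cv_mono ck T_le)) andbT leqNgt.
apply/negP => v_lt; have [t' cert] := left_view_certified ck v_gt0 v_lt.
exact: no_cert ck cert.
Qed.

Lemma stuck_acted k : correct k -> exists T, forall u, T <= u -> acted (st k u) /\ cv (st k u) = v.
Proof.
move=> ck; have [T in_v] := stuck_in_view ck; set T' := T + 2 * Delta.
exists T' => u u_ge; split; last by apply: in_v; lia.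
have in_v_T' : cv (st k T') = v := in_v T' (leq_addr _ T).
have [tent_T' _ _] :=
  view_stable_persists ck (leq_addr _ T) (etrans in_v_T' (esym (in_v T (leqnn T)))).
have acted_T' : acted (st k T').
  have [tent_T _] := acted_after_timeout T Delta_gt0 ck.
  by apply: (acted_after_timeout T' Delta_gt0 ck).2; rewrite tent_T'; lia.
have [_ null_u not_u] :=
  view_stable_persists ck u_ge (etrans (in_v u (leq_trans (leq_addr _ T) u_ge)) (esym in_v_T')).
by case: acted_T' => [/null_u | [b /not_u]]; [left | right; exists b].
Qed.

Lemma stuck_settled : exists T, forall k, correct k ->
  forall u, T <= u -> acted (st k u) /\ cv (st k u) = v.
Proof.
apply: uniform_bound => [k s s' _ s_le settled u s'_le | k ck].
  exact: settled (leq_trans s_le s'_le).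
exact: stuck_acted.
Qed.

Section Settled.
Variable T1 : nat.
Hypothesis settled : forall k, correct k -> forall u, T1 <= u -> acted (st k u) /\ cv (st k u) = v.
Local Notation T2 := (maxn GST T1 + Delta).

Lemma settled_received p j : correct p -> correct j ->
  (cnull (st p T1) -> cS (st j T2) (Null p v)) /\
  (forall b, cnot (st p T1) = Some b -> bview b = v /\ cS (st j T2) (Vote p b)).
Proof.
move=> cp cj; have [null_sent not_sent] := flags_backed T1 cp.
rewrite (settled cp (leqnn T1)).2 in null_sent not_sent; split.
  by move/null_sent => [s s_le sent]; apply: sent_received cp cj sent _; lia.
move=> b /not_sent [vb [s s_le sent]]; split=> //.
by apply: sent_received cp cj sent _; lia.
Qed.

Lemma settled_nullified j : correct j -> cnull (st j T2.+1).
Proof.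
move=> cj; have v_at u : T1 <= u -> cv (st j u) = v by move/(settled cj)=> [].
have T12 : T1 <= T2 by lia.
have [[null_j | [bj not_j]] v_j] := settled cj T12.
  have [_ null_persist _] :=
    view_stable_persists cj (leqnSn T2) (etrans (v_at _ (leq_trans T12 (leqnSn _))) (esym v_j)).
  exact: null_persist.
have [_ /(_ bj not_j) [vbj _]] := flags_backed T2 cj; rewrite v_j in vbj.
set K := [set p | correct p]; set X := [set p | cnot (st p T1) == Some bj].
(* Either 2f+1 correct processors voted for bj, which M-notarizes it, or the
   other >= 2f+1 correct ones nullified or voted for another block, which
   triggers step (8) at j. *)
have [M | few] := leqP (2 * f + 1) #|K :&: X|.
  exfalso; apply: (no_cert cj); right; exists bj; split=> //.
  rewrite /Mnot; apply/orP; right; apply: leq_trans M (subset_leq_card _).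
  apply/subsetP => p; rewrite !inE => /andP[cp /eqP not_p].
  exact: ((settled_received cp cj).2 _ not_p).2.
apply: (slot_nullifies (exec_slot T2.+1 cj) (b := bj) (P := K :\: X)) => //=.
- by rewrite v_j v_at // (leq_trans T12).
- by rewrite -(leq_add2l #|K :&: X|) cardsID; apply: leq_trans _ correct_card; lia.
move=> p; rewrite !inE v_j => /andP[notX cp].
have [[null_p | [b' not_p]] _] := settled cp (leqnn T1).
  by left; apply: (settled_received cp cj).1.
have [vb' V] := (settled_received cp cj).2 _ not_p.
by right; exists b'; split=> // b'bj; rewrite not_p b'bj eqxx in notX.
Qed.

Lemma settled_false : False.
Proof.
have [q cq] : exists q, correct q.
  have : 0 < #|[set p | correct p]| by apply: leq_trans correct_card; lia.
  by case/card_gt0P => q; rewrite inE; exists q.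
apply: (no_cert cq (t := maxn GST T2.+1 + Delta)); left.
apply: leq_trans (_ : 2 * f + 1 <= n - f) (leq_trans correct_card (subset_leq_card _)).
  by lia.
apply/subsetP => p; rewrite !inE => cp.
have [/(_ (settled_nullified cp)) [s s_le sent] _] := flags_backed T2.+1 cp.
rewrite (settled cp _).2 in sent; last by lia.
by apply: sent_received cp cq sent _; lia.
Qed.

End Settled.

Lemma stuck_false : False.
Proof. by have [T1 settled] := stuck_settled; apply: settled_false settled. Qed.

End Stuck.

Lemma reaches_view v : 0 < v -> forall k, correct k -> exists t, v <= cv (st k t).
Proof.
elim: v => [// | v IH] _ k ck; have [-> | v_gt0] := posnP v.
  by exists 0; apply: cv_gt0.
have [[j [t [cj cert]]] | no_cert] :=
  classic (exists j t, correct j /\ certified f (cS (st j t)) v).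
  have [t' cert'] := certified_spreads cj ck v_gt0 cert.
  have [t1 v_le] := IH v_gt0 k ck.
  exact: certified_leaves ck v_le cert'.
case: (stuck_false v_gt0 (IH v_gt0)) => k' t' ck' cert'.
by apply: no_cert; exists k', t'.
Qed.

End Resilience.
End Execution.

Theorem lemma5 (n f Delta GST : nat) (H : block -> nat) (correct : pred 'I_n)
    (inbox : 'I_n -> nat -> msgset n) (st : 'I_n -> nat -> cfg n) :
  5 * f + 1 <= n ->
  0 < Delta ->
  #|[set p | ~~ correct p]| <= f ->
  execution f Delta GST H correct inbox st ->
  forall (i : 'I_n) (v : nat), correct i -> 1 <= v -> enters st i v.
Proof.
move=> n_big Delta_gt0 faulty_le exec i v ci v_gt0.
have [-> | v_ne1] := eqVneq v 1; [by left | right].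
have [t v_le] := reaches_view exec n_big Delta_gt0 faulty_le v_gt0 ci.
apply: (entered_upto exec (t := t) ci).
by rewrite v_le andbT ltn_neqAle eq_sym v_ne1.
Qed.
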